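(* Let $q \geq 5$ be a prime power and let $\mathcal{X}$ be a plane curve of degree $q-1$ defined over $\mathbb{F}_q$ without $\mathbb{F}_q$-linear components with $\mathrm{N}_q(\mathcal{X}) = (q-1)^2$. If there are two distinct $\mathbb{F}_q$-lines $l^1_\infty, l^2_\infty$ with $(l^1_\infty \cup l^2_\infty)(\mathbb{F}_q) \subseteq Z(\mathcal{X})$, then $a_0 = 3$.
   Context: $\mathcal{X}(\mathbb{F}_q)=\mathcal{X}\cap\mathbb{P}^2(\mathbb{F}_q)$, $\mathrm{N}_q(\mathcal{X})=\#\mathcal{X}(\mathbb{F}_q)$; ''without $\mathbb{F}_q$-linear components'' means no line defined over $\mathbb{F}_q$ is a component. $Z(\mathcal{X}) := \mathbb{P}^2(\mathbb{F}_q)\setminus\mathcal{X}(\mathbb{F}_q)$. $a_0$ is the number of $\mathbb{F}_q$-lines containing no point of $\mathcal{X}(\mathbb{F}_q)$. *)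

From mathcomp Require Import all_boot all_algebra all_field.
From mathcomp Require Import mpoly.
Set Implicit Arguments. Unset Strict Implicit. Unset Printing Implicit Defensive.
Import GRing.Theory.
Local Open Scope ring_scope.

(* Homogeneous coordinates over a finite field F: a vector of F^3. *)
Definition vec3 (F : finFieldType) := {ffun 'I_3 -> F}.

(* Canonical representative of a projective point / line of P^2(F):
   nonzero vector whose first nonzero coordinate equals 1. *)
Definition normalized (F : finFieldType) (v : vec3 F) : bool :=
  [|| v ord0 == 1,
      (v ord0 == 0) && (v (inord 1) == 1)
    | [&& v ord0 == 0, v (inord 1) == 0 & v (inord 2) == 1]].

(* P^2(F_q); F_q-lines are represented by the same set (coefficient vectors). *)
Definition P2 (F : finFieldType) : {set vec3 F} := [set v | normalized v].
Definition lines (F : finFieldType) : {set vec3 F} := [set l | normalized l].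

Definition on_line (F : finFieldType) (l v : vec3 F) : bool :=
  \sum_(i < 3) l i * v i == 0.

Definition curve_pts (F : finFieldType) (f : {mpoly F[3]}) : {set vec3 F} :=
  [set v in P2 F | f.@[fun i => v i] == 0].

Definition Nq (F : finFieldType) (f : {mpoly F[3]}) : nat := #|curve_pts f|.

Definition Zset (F : finFieldType) (f : {mpoly F[3]}) : {set vec3 F} :=
  P2 F :\: curve_pts f.

Definition linform (F : finFieldType) (a : vec3 F) : {mpoly F[3]} :=
  \sum_(i < 3) a i *: 'X_i.

Definition no_Fq_linear_components (F : finFieldType) (f : {mpoly F[3]}) : Prop :=
  forall a : vec3 F, a != 0 -> ~ exists g : {mpoly F[3]}, f = linform a * g.

Definition line_pts (F : finFieldType) (l : vec3 F) : {set vec3 F} :=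
  [set v in P2 F | on_line l v].

Definition a0 (F : finFieldType) (f : {mpoly F[3]}) : nat :=
  #|[set l in lines F | [disjoint line_pts l & curve_pts f]]|.

(** Take coordinates (x : y : z) in which l1 and l2 are x = 0 and y = 0. Since
    no F_q-point of these lines lies on the curve, every point of X(F_q) is
    (1 : c : t) with c <> 0. Summing powers of t over F_q kills every monomial
    except those of t-degree q - 1, so for a form g of degree q - 1,
    sum_t g(1, c, t) = -g(0, 0, 1) and sum_t t g(1, c, t) is affine in c.
    The first sum is nonzero because l1 and l2 meet off the curve, so each of
    the q - 1 values of c carries at most q - 1 points; N_q = (q - 1)^2 thus
    forces exactly one non-root t(c) for every c, and the second sum shows
    t(c) = alpha + beta c. Hence the F_q-points off l1, l2 and the curve form a
    line minus two points, and its closure is the only F_q-line besides l1 and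
    l2 that misses the curve. *)

From mathcomp Require Import all_boot all_algebra all_field.
From mathcomp Require Import mpoly.
From mathcomp Require Import fingroup cyclic ring zify.
Set Implicit Arguments. Unset Strict Implicit. Unset Printing Implicit Defensive.
Import GRing.Theory.
Local Open Scope ring_scope.

Section PowerSums.
Variable F : finFieldType.

Lemma natr_card_finField : #|F|%:R = 0 :> F.
Proof.
have := @expg_cardG (FinRing.Zmodule_to_baseFinGroup F) [set: F]%G (1%R : F) (in_setT _).
by rewrite FinRing.zmodXgE cardsT.
Qed.

Lemma sum_expr_finField_eq0 k : (0 < k < #|F|.-1)%N -> \sum_(t : F) t ^+ k = 0.
Proof.
case/andP=> k_gt0 k_lt.
have [a a_neq0 ak_neq1] : exists2 a : F, a != 0 & a ^+ k != 1.
  apply/exists_inP; rewrite -negb_forall_in; apply/forall_inP => ak1.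
  have: (size (enum (predC1 (0%R : F))) <= k)%N.
    apply: max_unity_roots k_gt0 _ (enum_uniq _); apply/allP => x.
    by rewrite mem_enum unity_rootE => /ak1.
  by rewrite -cardE cardC1 leqNgt k_lt.
have: \sum_(t : F) t ^+ k = a ^+ k * \sum_(t : F) t ^+ k.
  rewrite mulr_sumr (reindex_inj (mulfI a_neq0)) /=.
  by apply: eq_bigr => t _; rewrite exprMn.
move/eqP; rewrite -subr_eq0 -{1}[\sum_t _]mul1r -mulrBl mulf_eq0 subr_eq0.
by rewrite eq_sym (negbTE ak_neq1) => /eqP.
Qed.

Lemma sum_expr_finField k : (2 < #|F|)%N -> (k <= #|F|)%N ->
  \sum_(t : F) t ^+ k = if k == #|F|.-1 then -1 else 0.
Proof.
move=> F_gt2 k_le.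
have expr_pred_card (t : F) : t != 0 -> t ^+ #|F|.-1 = 1.
  move=> t_neq0; apply: (mulfI t_neq0).
  by rewrite mulr1 -exprS prednK ?expf_card //; lia.
have [-> | k_neq] := eqVneq k #|F|.-1.
  have q1_gt0 : (0 < #|F|.-1)%N by lia.
  rewrite (bigD1 0) //= expr0n eqn0Ngt q1_gt0 /= add0r.
  rewrite (eq_bigr (fun=> 1)); last by move=> t; apply: expr_pred_card.
  by rewrite sumr_const cardC1 -subn1 natrB ?natr_card_finField ?sub0r // (ltn_trans _ F_gt2).
have [-> | k_gt0] := posnP k.
  by rewrite (eq_bigr (fun=> 1)) // sumr_const cardT -cardE natr_card_finField.
have [k_lt | k_gt] := ltnP k #|F|.-1; first by apply: sum_expr_finField_eq0; lia.
have -> : k = #|F| by lia.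
rewrite (eq_bigr (fun t => t ^+ 1)) => [|t _]; last by rewrite expf_card.
by apply: sum_expr_finField_eq0; lia.
Qed.

End PowerSums.

Local Notation i1 := (@Ordinal 3 1 isT).
Local Notation i2 := (@Ordinal 3 2 isT).

Lemma big_ord3 (R : Type) (idx : R) (op : Monoid.law idx) (G : 'I_3 -> R) :
  \big[op/idx]_(i < 3) G i = op (op (G ord0) (G i1)) (G i2).
Proof.
rewrite !big_ord_recr big_ord0 Monoid.mul1m /=.
by congr (op (op (G _) (G _)) (G _)); apply: val_inj.
Qed.

Lemma ord3P (P : 'I_3 -> Prop) : P ord0 -> P i1 -> P i2 -> forall i, P i.
Proof.
move=> P0 P1 P2 [[|[|[|j]]] lt_j3] //.
- by rewrite (_ : Ordinal _ = ord0) //; apply: val_inj.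
- by rewrite (_ : Ordinal _ = i1) //; apply: val_inj.
- by rewrite (_ : Ordinal _ = i2) //; apply: val_inj.
Qed.

Lemma vec3P (F : finFieldType) (u v : vec3 F) :
  u ord0 = v ord0 -> u i1 = v i1 -> u i2 = v i2 -> u = v.
Proof. by move=> *; apply/ffunP; apply: ord3P. Qed.

Section Vec3Defs.
Variable F : finFieldType.
Implicit Types (s x y z : F) (a b k l u v w : vec3 F).

Definition mk3 x y z : vec3 F := [ffun i : 'I_3 => nth 0 [:: x; y; z] i].
Definition dot l v : F := \sum_(i < 3) l i * v i.
Definition vscale s v : vec3 F := [ffun i => s * v i].
Definition comb3 x u y v z w : vec3 F := [ffun i => x * u i + y * v i + z * w i].
Definition cross3 a b : vec3 F :=
  mk3 (a i1 * b i2 - a i2 * b i1) (a i2 * b ord0 - a ord0 * b i2)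
      (a ord0 * b i1 - a i1 * b ord0).

Lemma dotE l v : dot l v = l ord0 * v ord0 + l i1 * v i1 + l i2 * v i2.
Proof. exact: big_ord3. Qed.

End Vec3Defs.

Ltac vec3_ring := apply: vec3P; rewrite ?dotE !ffunE /=; ring.

Section Vec3.
Variable F : finFieldType.
Implicit Types (s x y z : F) (a b k l u v w : vec3 F).

Lemma dot_scaler l s v : dot l (vscale s v) = s * dot l v.
Proof. by rewrite !dotE !ffunE; ring. Qed.

Lemma dot_scalel l s v : dot (vscale s l) v = s * dot l v.
Proof. by rewrite !dotE !ffunE; ring. Qed.

Lemma dot_combr l x u y v z w :
  dot l (comb3 x u y v z w) = x * dot l u + y * dot l v + z * dot l w.
Proof. by rewrite !dotE !ffunE; ring. Qed.

Lemma dot_combl l x u y v z w :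
  dot (comb3 x u y v z w) l = x * dot u l + y * dot v l + z * dot w l.
Proof. by rewrite !dotE !ffunE; ring. Qed.

Lemma vscaleA s1 s2 v : vscale s1 (vscale s2 v) = vscale (s1 * s2) v.
Proof. by apply/ffunP => i; rewrite !ffunE mulrA. Qed.

Lemma vscale_inj s : s != 0 -> injective (vscale s).
Proof.
by move=> s_neq0 u v /ffunP uv; apply/ffunP => i; have := uv i; rewrite !ffunE => /mulfI->.
Qed.

Lemma dotC l v : dot l v = dot v l.
Proof. by rewrite !dotE; ring. Qed.

Lemma dot0r l : dot l 0 = 0.
Proof. by rewrite dotE !ffunE !mulr0 !addr0. Qed.

Lemma dot_neq0r l v : dot l v != 0 -> v != 0.
Proof. by apply: contraNneq => ->; rewrite dot0r. Qed.

Lemma exists_dot_neq0 v : v != 0 -> exists k, dot k v != 0.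
Proof.
move=> v_neq0; have [i vi_neq0] : exists i, v i != 0.
  apply/existsP; apply: contraNT v_neq0 => /existsPn v0.
  by apply/eqP/ffunP => i; rewrite ffunE; apply/eqP/negPn/v0.
exists [ffun j => (i == j)%:R]; rewrite /dot (bigD1 i) //= big1 => [|j /negbTE ij].
  by rewrite ffunE eqxx mul1r addr0.
by rewrite ffunE eq_sym ij mul0r.
Qed.

Lemma cross3_cross3 k a b : cross3 k (cross3 a b) = comb3 (dot k b) a (- dot k a) b 0 k.
Proof. by vec3_ring. Qed.

Lemma cross3_eq0 k a b : cross3 a b = 0 -> vscale (dot k a) b = vscale (dot k b) a.
Proof.
move=> ab0; have := cross3_cross3 k a b.
rewrite ab0 (_ : cross3 k 0 = 0); last by vec3_ring.
move/ffunP=> triple; apply/ffunP => i; move: (triple i); rewrite !ffunE.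
by move/esym/eqP; rewrite mul0r addr0 mulNr subr_eq0 eq_sym => /eqP.
Qed.

Lemma dot_cross3l a b : dot a (cross3 a b) = 0.
Proof. by rewrite dotE !ffunE /=; ring. Qed.

Lemma dot_cross3r a b : dot b (cross3 a b) = 0.
Proof. by rewrite dotE !ffunE /=; ring. Qed.

Lemma dot_frame a b k x y z :
  let D := dot k (cross3 a b) in
  let P := comb3 x (cross3 b k) y (cross3 k a) z (cross3 a b) in
  [/\ dot a P = x * D, dot b P = y * D & dot k P = z * D].
Proof. by rewrite /= !dot_combr !dotE !ffunE /=; split; ring. Qed.

Lemma frame_decomp a b k v :
  vscale (dot k (cross3 a b)) v =
  comb3 (dot a v) (cross3 b k) (dot b v) (cross3 k a) (dot k v) (cross3 a b).
Proof. by vec3_ring. Qed.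

Lemma frame_decomp_dual a b k l :
  vscale (dot k (cross3 a b)) l =
  comb3 (dot l (cross3 b k)) a (dot l (cross3 k a)) b (dot l (cross3 a b)) k.
Proof. by vec3_ring. Qed.

Definition lead3 v : F :=
  if v ord0 != 0 then v ord0 else if v i1 != 0 then v i1 else v i2.
Definition normalize v : vec3 F := vscale (lead3 v)^-1 v.

Lemma normalizedE v : normalized v = (lead3 v == 1).
Proof.
have inord1 : inord 1 = i1 by apply: val_inj; rewrite /= inordK.
have inord2 : inord 2 = i2 by apply: val_inj; rewrite /= inordK.
rewrite /normalized /lead3 inord1 inord2.
have [->|v0] := eqVneq (v ord0) 0; have [->|v1] := eqVneq (v i1) 0;
  by rewrite /= ?orbF ?(eq_sym 0) ?oner_eq0.
Qed.

Lemma lead3_scale s v : lead3 (vscale s v) = s * lead3 v.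
Proof.
rewrite /lead3 !ffunE; have [-> | s_neq0] := eqVneq s 0; first by rewrite !mul0r eqxx.
by rewrite !mulf_eq0 (negbTE s_neq0) /=; case: ifP => _ //; case: ifP.
Qed.

Lemma lead3_eq0 v : (lead3 v == 0) = (v == 0).
Proof.
apply/idP/eqP => [|->]; last by rewrite /lead3 !ffunE eqxx.
rewrite /lead3; have [v0 | v0_neq0] := eqVneq (v ord0) 0; last by rewrite (negbTE v0_neq0).
have [v1 | v1_neq0] := eqVneq (v i1) 0; last by rewrite (negbTE v1_neq0).
by move/eqP=> v2; apply: vec3P; rewrite ffunE.
Qed.

Lemma normalized_neq0 v : normalized v -> v != 0.
Proof. by rewrite normalizedE -lead3_eq0 => /eqP->; rewrite oner_eq0. Qed.

Lemma normalized_normalize v : v != 0 -> normalized (normalize v).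
Proof. by rewrite -lead3_eq0 normalizedE lead3_scale => /mulVf->. Qed.

Lemma normalized_scale_eq s u v : normalized u -> normalized v -> u = vscale s v -> u = v.
Proof.
rewrite !normalizedE => /eqP lu1 /eqP lv1 uv.
have s1 : s = 1 by move: lu1; rewrite uv lead3_scale lv1 mulr1.
by apply/ffunP => i; rewrite uv s1 ffunE mul1r.
Qed.

Lemma cross3_normalized_eq0 a b : normalized a -> normalized b -> cross3 a b = 0 -> a = b.
Proof.
move=> an bn ab0; have [k ka_neq0] := exists_dot_neq0 (normalized_neq0 an).
suff: b = vscale (dot k b / dot k a) a by move/(normalized_scale_eq bn an)->.
by apply: (vscale_inj ka_neq0); rewrite cross3_eq0 // vscaleA mulrCA mulfV // mulr1.
Qed.

End Vec3.

Lemma dhomog_comp_mpoly n k (R : comNzRingType) (p : {mpoly R[n]})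
    (t : n.-tuple {mpoly R[k]}) d :
  p \is d.-homog -> (forall i, tnth t i \is 1.-homog) -> p \mPo t \is d.-homog.
Proof.
move=> /dhomogP p_homog t_homog; rewrite comp_mpolyE big_seq.
apply: rpred_sum => m m_supp; apply: rpredZ.
have <- : (\sum_i m i)%N = d by rewrite -mdegE; apply: p_homog.
apply: (big_ind2 (fun q e => q \is e.-homog)) => [|q1 e1 q2 e2|i _].
- exact: dhomog1.
- exact: dhomogM.
- by have := dhomogMn (m i) (t_homog i); rewrite mul1n.
Qed.

Section Evaluation.
Variable F : finFieldType.
Implicit Types (g : {mpoly F[3]}) (s x y z : F) (a v : vec3 F).

Definition mevalv g v : F := g.@[fun i => v i].

Lemma mevalv_mk3 g x y z :
  mevalv g (mk3 x y z) = \sum_(m <- msupp g) g@_m * (x ^+ m ord0 * y ^+ m i1 * z ^+ m i2).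
Proof. by rewrite /mevalv mevalE; apply: eq_bigr => m _; rewrite big_ord3 !ffunE. Qed.

Lemma mevalv_scale g d s v : g \is d.-homog -> mevalv g (vscale s v) = s ^+ d * mevalv g v.
Proof.
move=> /dhomogP g_homog; rewrite /mevalv !mevalE mulr_sumr.
apply: eq_big_seq => m m_supp.
have <- : (\sum_i m i)%N = d by rewrite -mdegE; apply: g_homog.
by rewrite !big_ord3 /= !ffunE !exprMn !exprD; ring.
Qed.

Lemma mevalv_scale_eq0 g d s v : g \is d.-homog -> s != 0 ->
  (mevalv g (vscale s v) == 0) = (mevalv g v == 0).
Proof.
move=> g_homog s_neq0; rewrite (mevalv_scale _ _ g_homog) mulf_eq0 expf_eq0.
by rewrite (negbTE s_neq0) andbF.
Qed.

Lemma mevalv_linform a v : mevalv (linform a) v = dot a v.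
Proof. by rewrite /mevalv /linform raddf_sum /=; apply: eq_bigr => i _; rewrite mevalZ mevalXU. Qed.

Lemma dhomog_linform a : linform a \is 1.-homog.
Proof. by apply: rpred_sum => i _; apply: rpredZ; rewrite dhomogX /= mdeg1. Qed.

Definition frame_mpoly g (U0 U1 U2 : vec3 F) : {mpoly F[3]} :=
  g \mPo [tuple linform (mk3 (U0 i) (U1 i) (U2 i)) | i < 3].

Lemma mevalv_frame g (U0 U1 U2 : vec3 F) x y z :
  mevalv (frame_mpoly g U0 U1 U2) (mk3 x y z) = mevalv g (comb3 x U0 y U1 z U2).
Proof.
rewrite /mevalv comp_mpoly_meval; apply: meval_eq => i.
by rewrite tnth_mktuple -/(mevalv _ _) mevalv_linform dotE !ffunE /=; ring.
Qed.

Lemma dhomog_frame_mpoly g d (U0 U1 U2 : vec3 F) :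
  g \is d.-homog -> frame_mpoly g U0 U1 U2 \is d.-homog.
Proof.
by move=> g_homog; apply: dhomog_comp_mpoly => // i; rewrite tnth_mktuple dhomog_linform.
Qed.

End Evaluation.

Definition mono3 (a b c : nat) : 'X_{1..3} := [multinom nth 0%N [:: a; b; c] i | i < 3].

Lemma mono3E (m : 'X_{1..3}) a b c :
  (m == mono3 a b c) = [&& m ord0 == a, m i1 == b & m i2 == c].
Proof.
apply/eqP/and3P => [->|[/eqP m0 /eqP m1 /eqP m2]]; first by rewrite !mnmE.
by apply/mnmP; apply: ord3P; rewrite mnmE.
Qed.

Lemma sum_msupp_mcoeff n (R : comNzRingType) (p : {mpoly R[n]}) m' :
  \sum_(m <- msupp p) p@_m * (m == m')%:R = p@_m'.
Proof. by rewrite {3}[p]mpolyE raddf_sum /=; apply: eq_bigr => m _; rewrite mcoeffZ mcoeffX. Qed.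

Section LineSums.
Variables (F : finFieldType) (g : {mpoly F[3]}).
Hypotheses (F_gt2 : (2 < #|F|)%N) (g_homog : g \is (#|F|.-1).-homog).

Lemma msupp_mdeg3 m : m \in msupp g -> (m ord0 + m i1 + m i2)%N = #|F|.-1.
Proof. by move/(dhomog_mf g_homog); rewrite /= mdegE big_ord3. Qed.

Lemma sum_expr_mul_mevalv_line j c : (j <= 1)%N ->
  \sum_(t : F) t ^+ j * mevalv g (mk3 1 c t) =
  \sum_(m <- msupp g) g@_m * (c ^+ m i1 * (if (m i2 + j == #|F|.-1)%N then -1 else 0)).
Proof.
move=> j_le1; under eq_bigr => t _ do rewrite mevalv_mk3 mulr_sumr.
rewrite exchange_big /=; apply: eq_big_seq => m /msupp_mdeg3 m_deg.
rewrite -sum_expr_finField //; last by lia.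
rewrite !mulr_sumr; apply: eq_bigr => t _; rewrite expr1n mul1r exprD; ring.
Qed.

Lemma sum_mevalv_line c : \sum_(t : F) mevalv g (mk3 1 c t) = - mevalv g (mk3 0 0 1).
Proof.
have := sum_expr_mul_mevalv_line c (isT : (0 <= 1)%N); under eq_bigr do rewrite mul1r.
move=> ->; rewrite mevalv_mk3 -sumrN; apply: eq_big_seq => m /msupp_mdeg3 m_deg.
rewrite addn0; have [m2_max | m2_lt] := eqVneq (m i2) #|F|.-1.
  have [-> ->] : m ord0 = 0%N /\ m i1 = 0%N by lia.
  by rewrite !expr0 expr1n; ring.
have [m0_gt0 | m1_gt0] : (0 < m ord0)%N \/ (0 < m i1)%N by lia.
  by rewrite !expr0n (eqn0Ngt (m ord0)) m0_gt0 /=; ring.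
by rewrite !expr0n (eqn0Ngt (m i1)) m1_gt0 /=; ring.
Qed.

Lemma sum_mul_mevalv_line c : \sum_(t : F) t * mevalv g (mk3 1 c t) =
  - (g@_(mono3 1 0 #|F|.-2) + g@_(mono3 0 1 #|F|.-2) * c).
Proof.
have := sum_expr_mul_mevalv_line c (isT : (1 <= 1)%N); under eq_bigr do rewrite expr1.
move=> ->; rewrite -!sum_msupp_mcoeff mulr_suml -big_split -sumrN /=.
apply: eq_big_seq => m /msupp_mdeg3 m_deg; rewrite !mono3E.
have [m2_sub | m2_neq] := eqVneq (m i2 + 1)%N #|F|.-1.
  have -> : m i2 = #|F|.-2 by lia.
  have [[-> ->] | [-> ->]] : (m ord0 = 1 /\ m i1 = 0 \/ m ord0 = 0 /\ m i1 = 1)%N by lia.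
    by rewrite !eqxx /=; ring.
  by rewrite !eqxx /=; ring.
rewrite (_ : (m i2 == #|F|.-2) = false) ?andbF /=; [ring | apply/negbTE/eqP => m2E].
by move: m2_neq; rewrite m2E addn1; case: #|F| F_gt2 => [|[|[|q]]] //= _; rewrite eqxx.
Qed.

End LineSums.

Section Incidence.
Variables (F : finFieldType) (f : {mpoly F[3]}).

Definition avoids (l : vec3 F) : Prop :=
  forall v, normalized v -> dot l v = 0 -> mevalv f v != 0.

Lemma disjoint_curveP l : reflect (avoids l) [disjoint line_pts l & curve_pts f].
Proof.
rewrite disjoint_subset; apply: (iffP subsetP) => [off_curve v vN lv0 | l_avoids v].
  by have := off_curve v; rewrite !inE vN /on_line -/(dot l v) lv0 eqxx; apply.
by rewrite !inE => /andP[vN /eqP lv0]; rewrite vN; apply: l_avoids.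
Qed.

Lemma subset_ZsetP l : reflect (avoids l) (line_pts l \subset Zset f).
Proof.
rewrite /Zset subsetD (_ : line_pts l \subset P2 F); first exact: disjoint_curveP.
by apply/subsetP => v; rewrite inE => /andP[].
Qed.

End Incidence.

Lemma exists_neq01 (F : finFieldType) : (2 < #|F|)%N -> exists c : F, (c != 0) && (c != 1).
Proof.
move=> F_gt2; apply/existsP; apply: contraTT F_gt2; rewrite negb_exists => /forallP only01.
have /subset_leq_card : [set: F] \subset [set 0; 1].
  by apply/subsetP => c _; have := only01 c; rewrite !inE negb_and !negbK.
by rewrite cardsT cards2 -leqNgt => /leq_trans; apply; case: (_ != _).
Qed.

Lemma line_in_graph (F : finFieldType) (k0 k1 k2 al be : F) : (2 < #|F|)%N ->
  (forall c t, c != 0 -> k0 + c * k1 + t * k2 = 0 -> t = al + be * c) ->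
  [\/ k1 = 0 /\ k2 = 0, k0 = 0 /\ k2 = 0 | k0 = - (k2 * al) /\ k1 = - (k2 * be)].
Proof.
move=> F_gt2 in_graph; have [k2_0 | k2_neq0] := eqVneq k2 0.
  have [k1_0 | k1_neq0] := eqVneq k1 0; first by constructor 1.
  have [k0_0 | k0_neq0] := eqVneq k0 0; first by constructor 2.
  have c_neq0 : - k0 / k1 != 0 by rewrite mulf_neq0 ?oppr_eq0 ?invr_eq0.
  have := in_graph _ (al + be * (- k0 / k1) + 1) c_neq0.
  rewrite k2_0 mulr0 addr0 (_ : k0 + _ * k1 = 0); last by field.
  by move=> /(_ erefl)/eqP; rewrite -subr_eq0 addrAC subrr add0r oner_eq0.
have on_graph c : c != 0 -> k0 + c * k1 + k2 * (al + be * c) = 0.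
  move=> c_neq0; rewrite -(in_graph c (- (k0 + c * k1) / k2) c_neq0); first by field.
  by field.
have [c2 /andP[c2_neq0 c2_neq1]] := exists_neq01 F_gt2.
have k1E : k1 = - (k2 * be).
  have : (c2 - 1) * (k1 + k2 * be) =
      (k0 + c2 * k1 + k2 * (al + be * c2)) - (k0 + 1 * k1 + k2 * (al + be * 1)) by ring.
  rewrite !on_graph ?oner_neq0 // subrr => /eqP.
  by rewrite mulf_eq0 subr_eq0 (negbTE c2_neq1) addr_eq0 => /eqP.
constructor 3; split => //; apply/eqP; rewrite -addr_eq0.
by rewrite -(on_graph 1 (oner_neq0 _)) k1E; apply/eqP; ring.
Qed.

Lemma eq_bound_of_sum (I : finType) (P : pred I) (a : I -> nat) m :
  (forall i, P i -> a i <= m)%N -> (\sum_(i | P i) a i = #|P| * m)%N ->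
  forall i, P i -> a i = m.
Proof.
move=> a_le sum_a; have [_] := leqif_sum (fun i Pi => leqif_eq (a_le i Pi)).
have -> : (\sum_(i | P i) m = #|P| * m)%N by exact: sum_nat_const.
by rewrite sum_a eqxx => /esym/forall_inP a_eq i /a_eq/eqP.
Qed.

Section Chart.
Variables (F : finFieldType) (f : {mpoly F[3]}) (l1 l2 k : vec3 F).
Hypotheses (F_gt2 : (2 < #|F|)%N) (f_homog : f \is (#|F|.-1).-homog).
Hypotheses (l1_avoids : avoids f l1) (l2_avoids : avoids f l2).
Hypothesis D_neq0 : dot k (cross3 l1 l2) != 0.

(* [U0, U1, U2] is dual to [l1, l2, k] up to the factor [D], so [pt c t] is the
   point with coordinates (1 : c : t) with respect to the lines l1, l2, k. *)
Local Notation U0 := (cross3 l2 k).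
Local Notation U1 := (cross3 k l1).
Local Notation U2 := (cross3 l1 l2).
Local Notation D := (dot k (cross3 l1 l2)).
Local Notation pt c t := (comb3 1 U0 c U1 t U2).

Lemma dot_pt c t : [/\ dot l1 (pt c t) = D, dot l2 (pt c t) = c * D & dot k (pt c t) = t * D].
Proof. by have [-> -> ->] := dot_frame l1 l2 k 1 c t; rewrite mul1r. Qed.

Lemma pt_neq0 c t : pt c t != 0.
Proof. by apply: (@dot_neq0r _ l1); have [-> _ _] := dot_pt c t. Qed.

Definition chart (v : vec3 F) : F * F := (dot l2 v / dot l1 v, dot k v / dot l1 v).
Definition chart_inv (ct : F * F) : vec3 F := normalize (pt ct.1 ct.2).

Lemma chart_scale s v : s != 0 -> chart (vscale s v) = chart v.
Proof.
by move=> s_neq0; rewrite /chart !dot_scaler !invfM; congr pair; rewrite mulrACA mulfV ?mul1r.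
Qed.

Lemma chart_pt c t : chart (pt c t) = (c, t).
Proof. by have [d1 d2 d3] := dot_pt c t; rewrite /chart d1 d2 d3 !mulfK. Qed.

Lemma chart_invK : cancel chart_inv chart.
Proof. by move=> [c t]; rewrite chart_scale ?chart_pt // invr_eq0 lead3_eq0 pt_neq0. Qed.

Lemma normalized_chart_inv ct : normalized (chart_inv ct).
Proof. exact/normalized_normalize/pt_neq0. Qed.

Lemma scale_pt_chart v : dot l1 v != 0 ->
  vscale D v = vscale (dot l1 v) (pt (chart v).1 (chart v).2).
Proof. by move=> l1v_neq0; rewrite frame_decomp; apply/ffunP => i; rewrite !ffunE /=; field. Qed.

Lemma chart_invE v : normalized v -> dot l1 v != 0 -> chart_inv (chart v) = v.
Proof.
move=> vN l1v_neq0; have := normalized_chart_inv (chart v).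
rewrite /chart_inv /normalize; set w := comb3 _ _ _ _ _ _ => wN.
have lead_neq0 : lead3 w != 0 by rewrite lead3_eq0 pt_neq0.
symmetry; apply: (normalized_scale_eq (s := dot l1 v / D * lead3 w)) vN wN _.
apply: (vscale_inj D_neq0); rewrite scale_pt_chart // !vscaleA -/w.
by congr (vscale _ _); field; apply/andP.
Qed.

Lemma mevalv_U2_neq0 : mevalv f U2 != 0.
Proof.
have U2_neq0 : U2 != 0 by apply: (@dot_neq0r _ k).
have := l1_avoids (normalized_normalize U2_neq0).
rewrite dot_scaler dot_cross3l mulr0 => /(_ erefl).
by rewrite (mevalv_scale_eq0 _ f_homog) // invr_eq0 lead3_eq0.
Qed.

Definition chart_curve : {set F * F} :=
  [set ct | (ct.1 != 0) && (mevalv f (pt ct.1 ct.2) == 0)].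

Lemma curve_ptsE : curve_pts f = chart_inv @: chart_curve.
Proof.
apply/setP => v; apply/idP/imsetP => [|[ct ct_in ->]]; last first.
  move: ct_in; rewrite !inE normalized_chart_inv => /andP[_].
  by rewrite (mevalv_scale_eq0 _ f_homog) // invr_eq0 lead3_eq0 pt_neq0.
rewrite !inE => /andP[vN /eqP fv0].
have avoidsN l : avoids f l -> dot l v != 0.
  by move=> l_avoids; apply/eqP => /(l_avoids v vN); rewrite /mevalv fv0 eqxx.
have l1v_neq0 := avoidsN _ l1_avoids; have l2v_neq0 := avoidsN _ l2_avoids.
exists (chart v); last by rewrite chart_invE.
rewrite inE /= mulf_neq0 ?invr_eq0 //= -(mevalv_scale_eq0 _ f_homog l1v_neq0).
by rewrite -scale_pt_chart // (mevalv_scale_eq0 _ f_homog) // /mevalv fv0.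
Qed.

Lemma Nq_chart :
  Nq f = (\sum_(c : F | c != 0%R) #|[set t | mevalv f (pt c t) == 0%R]|)%N.
Proof.
rewrite /Nq curve_ptsE card_imset; last exact: can_inj chart_invK.
under eq_bigr do rewrite -sum1_card.
by rewrite pair_big_dep /= -sum1_card; apply: eq_bigl => -[c t]; rewrite !inE.
Qed.

Local Notation g := (frame_mpoly f U0 U1 U2).
Local Notation kappa := (mevalv f U2).

Definition alpha : F := g@_(mono3 1 0 #|F|.-2) / kappa.
Definition beta : F := g@_(mono3 0 1 #|F|.-2) / kappa.

Lemma sum_mevalv_pt c : \sum_(t : F) mevalv f (pt c t) = - kappa.
Proof.
have g_homog := dhomog_frame_mpoly U0 U1 U2 f_homog.
under eq_bigr do rewrite -mevalv_frame.
rewrite sum_mevalv_line // mevalv_frame; congr (- mevalv f _).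
by apply/ffunP => i; rewrite !ffunE !mul0r !add0r mul1r.
Qed.

Lemma sum_mul_mevalv_pt c : \sum_(t : F) t * mevalv f (pt c t) = - (kappa * (alpha + beta * c)).
Proof.
have g_homog := dhomog_frame_mpoly U0 U1 U2 f_homog.
under eq_bigr do rewrite -mevalv_frame.
rewrite sum_mul_mevalv_line // /alpha /beta; congr (- _).
by field; apply: mevalv_U2_neq0.
Qed.

Hypothesis Nq_f : Nq f = (#|F|.-1 ^ 2)%N.

Lemma card_roots_pt c : c != 0 -> #|[set t | mevalv f (pt c t) == 0]| = #|F|.-1.
Proof.
apply: (@eq_bound_of_sum _ (predC1 0) (fun c => #|[set t | mevalv f (pt c t) == 0]|)).
  2: by rewrite cardC1 mulnn -Nq_f Nq_chart.
move=> {}c _.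
rewrite -ltnS prednK; last by apply: leq_ltn_trans F_gt2.
rewrite -(cardsC [set t | mevalv f (pt c t) == 0]) -addn1 leq_add2l card_gt0.
apply/negP => /eqP no_nonroot; move: mevalv_U2_neq0.
rewrite -oppr_eq0 -(sum_mevalv_pt c) big1 ?eqxx // => t _.
have : t \notin ~: [set t | mevalv f (pt c t) == 0] by rewrite no_nonroot inE.
by rewrite !inE negbK => /eqP.
Qed.

Lemma mevalv_pt_neq0 c t : c != 0 -> (mevalv f (pt c t) != 0) = (t == alpha + beta * c).
Proof.
move=> c_neq0; set roots := [set x | mevalv f (pt c x) == 0].
have /cards1P [t0 nonrootsE] : #|~: roots| == 1%N.
  have := cardsC roots; rewrite card_roots_pt // -addn1.
  by rewrite -[in RHS](prednK (ltn_trans _ F_gt2)) // -addn1 => /addnI->.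
have nonroot x : (mevalv f (pt c x) != 0) = (x == t0).
  by rewrite -[x == t0]in_set1 -nonrootsE !inE.
have root x : x != t0 -> mevalv f (pt c x) = 0 by rewrite -nonroot => /negbNE/eqP.
have sum_at_t0 (h : F -> F) : (forall x, x != t0 -> h x = 0) -> \sum_x h x = h t0.
  by move=> h0; rewrite (bigD1 t0) //= big1 ?addr0 // => x /h0.
have e0 : mevalv f (pt c t0) = - kappa by rewrite -(sum_mevalv_pt c) (sum_at_t0 _ root).
have e1 : t0 * mevalv f (pt c t0) = - (kappa * (alpha + beta * c)).
  by rewrite -sum_mul_mevalv_pt (sum_at_t0 (fun x => x * _)) // => x /root->; rewrite mulr0.
rewrite nonroot; congr (t == _); apply: (mulfI mevalv_U2_neq0); apply: oppr_inj.
by rewrite -e1 -mulNr -e0 mulrC.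
Qed.

Lemma avoids_chartP l :
  avoids f l <-> forall c t, c != 0 -> dot l (pt c t) = 0 -> t = alpha + beta * c.
Proof.
split=> [l_avoids c t c_neq0 lpt0 | on_graph v vN lv0].
  apply/eqP; rewrite -mevalv_pt_neq0 //.
  have := l_avoids _ (normalized_chart_inv (c, t)); rewrite dot_scaler lpt0 mulr0 => /(_ erefl).
  by rewrite (mevalv_scale_eq0 _ f_homog) // invr_eq0 lead3_eq0 pt_neq0.
have [l1v0 | l1v_neq0] := eqVneq (dot l1 v) 0; first exact: l1_avoids.
have [l2v0 | l2v_neq0] := eqVneq (dot l2 v) 0; first exact: l2_avoids.
have chart1_neq0 : (chart v).1 != 0 by rewrite mulf_neq0 ?invr_eq0.
rewrite -(chart_invE vN l1v_neq0) (mevalv_scale_eq0 _ f_homog) ?invr_eq0 ?lead3_eq0 ?pt_neq0 //.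
rewrite [chart v]surjective_pairing mevalv_pt_neq0 //; apply/eqP/on_graph => //.
apply: (mulfI l1v_neq0); rewrite -dot_scaler -scale_pt_chart //.
by rewrite dot_scaler lv0 !mulr0.
Qed.

Local Notation star := (comb3 alpha l1 beta l2 (-1) k).

Definition lstar : vec3 F := normalize star.

Lemma dot_star_U2 : dot star U2 = - D.
Proof. by rewrite dot_combl dot_cross3l dot_cross3r !mulr0 !add0r mulN1r. Qed.

Lemma star_neq0 : star != 0.
Proof. by apply: (@dot_neq0r _ U2); rewrite dotC dot_star_U2 oppr_eq0. Qed.

Lemma normalized_lstar : normalized lstar.
Proof. exact/normalized_normalize/star_neq0. Qed.

Lemma avoids_lstar : avoids f lstar.
Proof.
apply/avoids_chartP => c t _; have [d1 d2 d3] := dot_pt c t.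
rewrite dot_scalel dot_combl d1 d2 d3 => /eqP.
rewrite mulf_eq0 invr_eq0 lead3_eq0 (negbTE star_neq0) /= => /eqP star_pt0.
have : (alpha + beta * c - t) * D = 0 by rewrite -star_pt0; ring.
by move/eqP; rewrite mulf_eq0 (negbTE D_neq0) orbF subr_eq0 => /eqP.
Qed.

Hypotheses (l1N : normalized l1) (l2N : normalized l2).

Lemma avoiding_lines :
  [set l in lines F | [disjoint line_pts l & curve_pts f]] = [set l1; l2; lstar].
Proof.
apply/setP => l; rewrite !inE; apply/andP/idP => [[lN /disjoint_curveP l_avoids] | ]; last first.
  case/orP => [/orP[]|] /eqP->; split; rewrite ?normalized_lstar //; apply/disjoint_curveP.
  - exact: l1_avoids.
  - exact: l2_avoids.
  - exact: avoids_lstar.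
have scaled_eq u s : normalized u -> vscale D l = vscale s u -> l = u.
  move=> uN lu; apply: (normalized_scale_eq (s := s / D)) lN uN _.
  by apply: (vscale_inj D_neq0); rewrite lu vscaleA mulrC divfK.
have dual := frame_decomp_dual l1 l2 k l.
have /(line_in_graph F_gt2) : forall c t, c != 0 ->
    dot l U0 + c * dot l U1 + t * dot l U2 = 0 -> t = alpha + beta * c.
  by move=> c t c_neq0; rewrite -[dot l U0]mul1r -dot_combr; apply: (avoids_chartP l).1.
case=> [[k1_0 k2_0] | [k0_0 k2_0] | [k0E k1E]].
- rewrite (scaled_eq l1 (dot l U0)) ?eqxx //; rewrite dual k1_0 k2_0; vec3_ring.
- rewrite (scaled_eq l2 (dot l U1)) ?eqxx ?orbT //; rewrite dual k0_0 k2_0; vec3_ring.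
rewrite (scaled_eq lstar (- dot l U2 * lead3 star)) ?eqxx ?orbT ?normalized_lstar //.
rewrite vscaleA mulfK ?lead3_eq0 ?star_neq0 // dual k0E k1E; vec3_ring.
Qed.

Lemma a0_eq3 : a0 f = 3%N.
Proof.
have [d1 d2 _] := dot_pt 0 0.
have l12 : l1 != l2 by apply: contra_neq D_neq0 => l12; rewrite -d1 [X in dot X _]l12 d2 mul0r.
have lstar_U2 : dot lstar U2 != 0.
  by rewrite dot_scalel dot_star_U2 mulf_eq0 invr_eq0 lead3_eq0 oppr_eq0 negb_or star_neq0.
have l1_star : l1 != lstar by apply: contraNneq lstar_U2 => <-; rewrite dot_cross3l.
have l2_star : l2 != lstar by apply: contraNneq lstar_U2 => <-; rewrite dot_cross3r.
by rewrite /a0 avoiding_lines setUC cardsU1 cards2 !inE negb_or !(eq_sym lstar) l12 l1_star l2_star.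
Qed.

End Chart.

Unset Implicit Arguments.

Theorem corollary3p10 (F : finFieldType) (q : nat)
  (hq : #|F| = q) (hq5 : (5 <= q)%N)
  (f : {mpoly F[3]}) (hf0 : f != 0) (hdeg : f \is (q.-1).-homog)
  (hlin : no_Fq_linear_components f)
  (hN : Nq f = (q.-1 ^ 2)%N)
  (l1 l2 : vec3 F) (hl1 : l1 \in lines F) (hl2 : l2 \in lines F)
  (hl12 : l1 != l2)
  (hZ : line_pts l1 :|: line_pts l2 \subset Zset f) :
  a0 f = 3%N.
Proof.
subst q; have F_gt2 : (2 < #|F|)%N by apply: leq_trans hq5.
rewrite !inE in hl1 hl2.
move: hZ; rewrite subUset => /andP[/subset_ZsetP l1_avoids /subset_ZsetP l2_avoids].
have /exists_dot_neq0 [k D_neq0] : cross3 l1 l2 != 0.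
  by apply: contra_neq hl12; apply: cross3_normalized_eq0.
exact: a0_eq3 F_gt2 hdeg l1_avoids l2_avoids D_neq0 hN hl1 hl2.
Qed.
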